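(* The moment generating function $M(z)=\sum_{n\ge0}m_nz^n$ of the standard V-monotone Gaussian distribution (with moments $m_{2k}=|\mathcal{OV}^2(2k)|/k!=P_k(1)$, $m_{2k+1}=0$) satisfies, for $z\in(-\tfrac12,\tfrac12)$, $M(0)=1$ and $$M(z)=\Big[S\Big(\frac{1}{\sqrt{1-2z^2}}\Big)\Big]^{-1}\quad (z\neq0).$$
   Context: $T(t)=\int_t^1\frac{s\,ds}{s^2-s+1}=-\tfrac12\log(t^2-t+1)-\tfrac{\sqrt3}{3}\big[\arctan\big(\tfrac{2t-1}{\sqrt3}\big)-\tfrac{\pi}{6}\big]$. The function $t\mapsto e^{T(t)}$ is a strictly decreasing bijection from $[0,\infty)$ onto $(0,e^{\sqrt3\pi/9}]$, and $S:(0,e^{\sqrt3\pi/9}]\to[0,\infty)$ denotes its inverse. The polynomials $P_n$ are defined by $Q_0=P_0=1$, $Q_{n+1}(x)=\sum_{m=0}^n[\int_x^1Q_m]Q_{n-m}(x)$, $P_{n+1}(x)=\sum_{m=0}^n[\int_0^xP_m+\int_x^1Q_m]P_{n-m}(x)$ on $[0,1]$. $\mathcal{OV}^2(2k)$: non-crossing pair partitions of $[2k]$ with a bijective labeling by $[k]$ such that along every chain of successively nearest outer blocks the labels are strictly decreasing then strictly increasing. *)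

From Stdlib Require Import Reals Lra List ClassicalEpsilon.
Import ListNotations.
Open Scope R_scope.

(** Polynomials as coefficient lists (constant term first). *)
Definition poly := list R.

Fixpoint padd (p q : poly) : poly :=
  match p, q with
  | [], _ => q
  | _, [] => p
  | a :: p', b :: q' => (a + b) :: padd p' q'
  end.

Definition pscale (c : R) (p : poly) : poly := map (Rmult c) p.

Fixpoint pmul (p q : poly) : poly :=
  match p with
  | [] => []
  | a :: p' => padd (pscale a q) (0 :: pmul p' q)
  end.

Fixpoint peval (p : poly) (x : R) : R :=
  match p with
  | [] => 0
  | a :: p' => a + x * peval p' x
  end.

Fixpoint pint_aux (k : nat) (p : poly) : poly :=
  match p with
  | [] => []
  | a :: p' => (a / INR (S k)) :: pint_aux (S k) p'
  end.

(** x |-> \int_0^x p *)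
Definition pint0x (p : poly) : poly := 0 :: pint_aux 0 p.

(** x |-> \int_x^1 p *)
Definition pintx1 (p : poly) : poly :=
  padd [peval (pint0x p) 1] (pscale (-1) (pint0x p)).

Definition psum (f : nat -> poly) (n : nat) : poly :=
  fold_right (fun m acc => padd (f m) acc) [] (seq 0 (S n)).

Definition Qnext (l : list poly) (n : nat) : poly :=
  psum (fun m => pmul (pintx1 (nth m l [])) (nth (n - m) l [])) n.

Fixpoint Qlist (n : nat) : list poly :=
  match n with
  | O => [[1]]
  | S n' => Qlist n' ++ [Qnext (Qlist n') n']
  end.

Definition Qpoly (n : nat) : poly := nth n (Qlist n) [].

Definition Pnext (ql pl : list poly) (n : nat) : poly :=
  psum (fun m => pmul (padd (pint0x (nth m pl [])) (pintx1 (nth m ql [])))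
                      (nth (n - m) pl [])) n.

Fixpoint Plist (n : nat) : list poly :=
  match n with
  | O => [[1]]
  | S n' => Plist n' ++ [Pnext (Qlist n') (Plist n') n']
  end.

Definition Ppoly (n : nat) : poly := nth n (Plist n) [].

Definition vmoment (n : nat) : R :=
  if Nat.even n then peval (Ppoly (Nat.div2 n)) 1 else 0.

(** T(t) = \int_t^1 s/(s^2-s+1) ds, in the closed form given in the paper. *)
Definition Tfun (t : R) : R :=
  - / 2 * ln (t ^ 2 - t + 1)
  - sqrt 3 / 3 * (atan ((2 * t - 1) / sqrt 3) - PI / 6).

(** S : inverse of t |-> exp (T t) on [0, +oo). *)
Definition Sinv (y : R) : R :=
  epsilon (inhabits 0) (fun t => 0 <= t /\ exp (Tfun t) = y).

From Pilot Require Import Defs.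
From Stdlib Require Import Reals Lra Lia List ClassicalEpsilon FunctionalExtensionality.
From Coquelicot Require Import Coquelicot.
Import ListNotations.
Open Scope R_scope.

(* Rather than computing with the recursions directly, one shows by induction
   that both [Q_n] and [P_n] satisfy the Euler relation
   [x u_k' = k u_k - (2k-1) u_(k-1)]; the step integrates the relation once
   to obtain one for the antiderivatives appearing in the recursions.  At
   [x = 1] the relation for [P_(n+1)] turns the recursion into
   [(n+1) a_(n+1) = (2n+1) a_n + c_n] for [a_n = P_n(1)], where [c] is the
   coefficient sequence of [A^2 (A - 1)], [A(w) = sum a_n w^n].  So the [a_n]
   are nonnegative and [A] solves [(1 - 2w) A' = A - A^2 + A^3], a separable
   equation with first integral [T(1/A) + ln(1 - 2w)/2].  On partial sums the
   equation holds as an inequality, and the first integral bounds them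
   uniformly for [w < 1/4]; on [A] itself it gives
   [exp T(1/A(w)) = 1/sqrt(1 - 2w)], i.e. [S(1/sqrt(1-2w)) = 1/A(w)].  Finally
   the moment series at [z] is [A(z^2)]. *)

Lemma peval_padd (p q : Defs.poly) (x : R) : peval (padd p q) x = peval p x + peval q x.
Proof.
  revert q; induction p as [|a p IH]; intros [|b q]; simpl; try ring.
  rewrite IH; ring.
Qed.

Lemma peval_pscale (c : R) (p : Defs.poly) (x : R) : peval (pscale c p) x = c * peval p x.
Proof.
  unfold pscale; induction p as [|a p IH]; simpl; [ring|].
  rewrite IH; ring.
Qed.

Lemma peval_pmul (p q : Defs.poly) (x : R) : peval (pmul p q) x = peval p x * peval q x.
Proof.
  induction p as [|a p IH]; simpl; [ring|].
  rewrite peval_padd, peval_pscale; simpl; rewrite IH; ring.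
Qed.

Lemma peval_fold_padd_seq (f : nat -> Defs.poly) (s n : nat) (x : R) :
  peval (fold_right (fun m acc => padd (f m) acc) [] (seq s (S n))) x =
  sum_f_R0 (fun i => peval (f (s + i)%nat) x) n.
Proof.
  revert s; induction n as [|n IH]; intros s; rewrite <- cons_seq; cbn [fold_right].
  - rewrite peval_padd; simpl; rewrite Nat.add_0_r; ring.
  - rewrite peval_padd, (decomp_sum _ (S n)) by lia; cbn [Nat.pred].
    rewrite Nat.add_0_r, IH; f_equal; apply sum_eq; intros i _.
    now rewrite Nat.add_succ_r.
Qed.

Lemma peval_psum (f : nat -> Defs.poly) (n : nat) (x : R) :
  peval (psum f n) x = sum_f_R0 (fun m => peval (f m) x) n.
Proof. apply peval_fold_padd_seq. Qed.

Lemma ex_derive_peval (p : Defs.poly) (x : R) : ex_derive (peval p) x.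
Proof.
  revert x; induction p as [|a p IH]; intros x; simpl.
  - apply ex_derive_const.
  - apply (ex_derive_plus (fun _ => a) (fun y => y * peval p y)).
    + apply ex_derive_const.
    + apply ex_derive_mult; [apply ex_derive_id | apply IH].
Qed.

Lemma is_derive_cst (c x : R) : is_derive (fun _ => c) x 0.
Proof. apply is_derive_Reals, derivable_pt_lim_const. Qed.

Lemma is_derive_sum_f_R0 (F : nat -> R -> R) (dF : nat -> R) (x : R) (n : nat) :
  (forall m, (m <= n)%nat -> is_derive (F m) x (dF m)) ->
  is_derive (fun y => sum_f_R0 (fun m => F m y) n) x (sum_f_R0 dF n).
Proof.
  intros H; rewrite <- sum_n_Reals.
  apply (is_derive_ext (fun y => sum_n (fun m => F m y) n)).
  - intros y; apply sum_n_Reals.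
  - now apply (@is_derive_sum_n R_AbsRing R_NormedModule).
Qed.

Lemma is_derive_pint_aux (p : Defs.poly) (k : nat) (x : R) :
  is_derive (fun y => y ^ S k * peval (pint_aux k p) y) x (x ^ k * peval p x).
Proof.
  revert k; induction p as [|a p IH]; intros k; simpl.
  - apply (is_derive_ext (fun _ => 0)); [intros; simpl; ring|].
    rewrite Rmult_0_r; apply is_derive_cst.
  - apply (is_derive_ext
      (fun y => a / INR (S k) * y ^ S k + y ^ S (S k) * peval (pint_aux (S k) p) y)).
    { intros y; simpl; ring. }
    replace (x ^ k * (a + x * peval p x))
      with (a / INR (S k) * (INR (S k) * x ^ Nat.pred (S k)) + x ^ S k * peval p x).
    2:{ assert (INR (S k) <> 0) by (apply not_0_INR; lia).
        simpl; field; assumption. }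
    apply (is_derive_plus (fun y => a / INR (S k) * y ^ S k)).
    + apply is_derive_scal, is_derive_Reals, derivable_pt_lim_pow.
    + apply IH.
Qed.

Lemma is_derive_pint0x (p : Defs.poly) (x : R) :
  is_derive (peval (pint0x p)) x (peval p x).
Proof.
  apply (is_derive_ext (fun y => y ^ 1 * peval (pint_aux 0 p) y)).
  { intros y; simpl; ring. }
  replace (peval p x) with (x ^ 0 * peval p x) by (simpl; ring).
  apply is_derive_pint_aux.
Qed.

Lemma pint0x_at0 (p : Defs.poly) : peval (pint0x p) 0 = 0.
Proof. simpl; ring. Qed.

Lemma peval_pintx1 (p : Defs.poly) (x : R) :
  peval (pintx1 p) x = peval (pint0x p) 1 - peval (pint0x p) x.
Proof. unfold pintx1; rewrite peval_padd, peval_pscale; simpl; ring. Qed.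

Lemma is_derive_pintx1 (p : Defs.poly) (x : R) :
  is_derive (peval (pintx1 p)) x (- peval p x).
Proof.
  apply (is_derive_ext (fun y => peval (pint0x p) 1 - peval (pint0x p) y)).
  { intros y; symmetry; apply peval_pintx1. }
  replace (- peval p x) with (0 - peval p x) by ring.
  apply (is_derive_minus (fun _ => peval (pint0x p) 1));
    [apply is_derive_cst | apply is_derive_pint0x].
Qed.

Lemma pintx1_at1 (p : Defs.poly) : peval (pintx1 p) 1 = 0.
Proof. rewrite peval_pintx1; ring. Qed.

Lemma Qlist_length (n : nat) : length (Qlist n) = S n.
Proof. induction n; simpl; auto. rewrite length_app, IHn; simpl; lia. Qed.

Lemma Plist_length (n : nat) : length (Plist n) = S n.
Proof. induction n; simpl; auto. rewrite length_app, IHn; simpl; lia. Qed.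

Lemma nth_Qlist (n m : nat) : (m <= n)%nat -> nth m (Qlist n) [] = Qpoly m.
Proof.
  induction n as [|n IH]; intros Hm.
  - now replace m with 0%nat by lia.
  - destruct (Nat.eq_dec m (S n)) as [->|Hne]; [reflexivity|].
    simpl; rewrite app_nth1 by (rewrite Qlist_length; lia); apply IH; lia.
Qed.

Lemma nth_Plist (n m : nat) : (m <= n)%nat -> nth m (Plist n) [] = Ppoly m.
Proof.
  induction n as [|n IH]; intros Hm.
  - now replace m with 0%nat by lia.
  - destruct (Nat.eq_dec m (S n)) as [->|Hne]; [reflexivity|].
    simpl; rewrite app_nth1 by (rewrite Plist_length; lia); apply IH; lia.
Qed.

Lemma Qpoly_succ (n : nat) : Qpoly (S n) = Qnext (Qlist n) n.
Proof.
  unfold Qpoly; simpl; rewrite app_nth2; rewrite Qlist_length; [|lia].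
  now rewrite Nat.sub_diag.
Qed.

Lemma Ppoly_succ (n : nat) : Ppoly (S n) = Pnext (Qlist n) (Plist n) n.
Proof.
  unfold Ppoly; simpl; rewrite app_nth2; rewrite Plist_length; [|lia].
  now rewrite Nat.sub_diag.
Qed.

Definition Q (n : nat) (x : R) : R := peval (Qpoly n) x.
Definition P (n : nat) (x : R) : R := peval (Ppoly n) x.
Definition IQ (n : nat) (x : R) : R := peval (pintx1 (Qpoly n)) x.
Definition IP (n : nat) (x : R) : R := peval (pint0x (Ppoly n)) x.

Lemma Q_0 (x : R) : Q 0 x = 1.
Proof. unfold Q, Qpoly; simpl; ring. Qed.

Lemma P_0 (x : R) : P 0 x = 1.
Proof. unfold P, Ppoly; simpl; ring. Qed.

Lemma Q_succ (n : nat) (x : R) :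
  Q (S n) x = sum_f_R0 (fun m => IQ m x * Q (n - m) x) n.
Proof.
  unfold Q at 1; rewrite Qpoly_succ; unfold Qnext; rewrite peval_psum.
  apply sum_eq; intros i Hi; rewrite peval_pmul, !nth_Qlist by lia; reflexivity.
Qed.

Lemma P_succ (n : nat) (x : R) :
  P (S n) x = sum_f_R0 (fun m => (IP m x + IQ m x) * P (n - m) x) n.
Proof.
  unfold P at 1; rewrite Ppoly_succ; unfold Pnext; rewrite peval_psum.
  apply sum_eq; intros i Hi.
  rewrite peval_pmul, peval_padd, nth_Qlist, !nth_Plist by lia; reflexivity.
Qed.

Lemma is_derive_IQ (n : nat) (x : R) : is_derive (IQ n) x (- Q n x).
Proof. apply is_derive_pintx1. Qed.

Lemma is_derive_IP (n : nat) (x : R) : is_derive (IP n) x (P n x).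
Proof. apply is_derive_pint0x. Qed.

Lemma IQ_at1 (n : nat) : IQ n 1 = 0.
Proof. apply pintx1_at1. Qed.

Lemma IP_at0 (n : nat) : IP n 0 = 0.
Proof. apply pint0x_at0. Qed.

Lemma ex_derive_Q (n : nat) (x : R) : ex_derive (Q n) x.
Proof. apply ex_derive_peval. Qed.

Lemma ex_derive_P (n : nat) (x : R) : ex_derive (P n) x.
Proof. apply ex_derive_peval. Qed.

Lemma Derive_Q_succ (n : nat) (x : R) :
  Derive (Q (S n)) x =
  sum_f_R0 (fun m => - Q m x * Q (n - m) x + IQ m x * Derive (Q (n - m)) x) n.
Proof.
  apply is_derive_unique.
  apply (is_derive_ext (fun y => sum_f_R0 (fun m => IQ m y * Q (n - m) y) n)).
  { intros y; symmetry; apply Q_succ. }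
  apply (is_derive_sum_f_R0 (fun m y => IQ m y * Q (n - m) y)); intros m _.
  apply (is_derive_mult (IQ m) (Q (n - m))).
  - apply is_derive_IQ.
  - apply Derive_correct, ex_derive_Q.
  - intros; apply Rmult_comm.
Qed.

Lemma Derive_P_succ (n : nat) (x : R) :
  Derive (P (S n)) x =
  sum_f_R0 (fun m => (P m x - Q m x) * P (n - m) x
                     + (IP m x + IQ m x) * Derive (P (n - m)) x) n.
Proof.
  apply is_derive_unique.
  apply (is_derive_ext (fun y => sum_f_R0 (fun m => (IP m y + IQ m y) * P (n - m) y) n)).
  { intros y; symmetry; apply P_succ. }
  apply (is_derive_sum_f_R0 (fun m y => (IP m y + IQ m y) * P (n - m) y)); intros m _.
  apply (is_derive_mult (fun y => IP m y + IQ m y) (P (n - m))).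
  - apply (is_derive_plus (IP m) (IQ m)); [apply is_derive_IP | apply is_derive_IQ].
  - apply Derive_correct, ex_derive_P.
  - intros; apply Rmult_comm.
Qed.

Lemma Derive_Q_0 (x : R) : Derive (Q 0) x = 0.
Proof.
  apply is_derive_unique, (is_derive_ext (fun _ => 1)); [intros; symmetry; apply Q_0|].
  apply is_derive_cst.
Qed.

Lemma Derive_P_0 (x : R) : Derive (P 0) x = 0.
Proof.
  apply is_derive_unique, (is_derive_ext (fun _ => 1)); [intros; symmetry; apply P_0|].
  apply is_derive_cst.
Qed.

(** * The Euler relation [x u_k' = k u_k - (2k-1) u_(k-1)] *)

Definition shift (u : nat -> R) (k : nat) : R := match k with O => 0 | S j => u j end.
Definition delta0 (m : nat) : R := match m with O => 1 | S _ => 0 end.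

Lemma sum_delta0_l (u : nat -> R) (n : nat) :
  sum_f_R0 (fun m => delta0 m * u (n - m)%nat) n = u n.
Proof.
  destruct n as [|n]; [simpl; ring|].
  rewrite decomp_sum by lia; cbn [delta0 Nat.pred].
  rewrite (sum_eq _ (fun _ => 0)) by (intros; ring).
  rewrite sum_cte, Nat.sub_0_r; ring.
Qed.

Lemma sum_cross (u U : nat -> R) (n : nat) :
  (forall k, u (S k) = sum_f_R0 (fun m => U m * u (k - m)%nat) k) ->
  sum_f_R0 (fun m => (2 * INR m - 1) * shift U m * u (n - m)%nat
                     + (2 * INR (n - m) - 1) * U m * shift u (n - m)%nat) n
  = 2 * INR n * u n.
Proof.
  intros Hrec; destruct n as [|n]; [simpl; ring|].
  rewrite sum_plus, decomp_sum, tech5 by lia; cbn [Nat.pred shift].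
  rewrite Nat.sub_diag; cbn [shift].
  rewrite (sum_eq _ (fun m => (2 * INR m + 1) * U m * u (n - m)%nat)).
  2:{ intros i _; cbn [shift]; rewrite Nat.sub_succ, S_INR; ring. }
  rewrite (sum_eq (fun m => (2 * INR (S n - m) - 1) * U m * shift u (S n - m)%nat)
                  (fun m => (2 * INR n - 2 * INR m + 1) * U m * u (n - m)%nat)).
  2:{ intros i Hi; replace (S n - i)%nat with (S (n - i)) by lia; cbn [shift].
      rewrite S_INR, minus_INR by lia; ring. }
  transitivity (sum_f_R0 (fun m => (2 * INR m + 1) * U m * u (n - m)%nat
                                   + (2 * INR n - 2 * INR m + 1) * U m * u (n - m)%nat) n);
    [rewrite sum_plus; ring|].
  rewrite (sum_eq _ (fun m => U m * u (n - m)%nat * (2 * INR (S n)))) by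
    (intros; rewrite S_INR; ring).
  rewrite <- scal_sum, <- Hrec; ring.
Qed.

(* The hypothesis on [U] is the once-integrated Euler relation, see [IQ_euler]
   and [IP_euler] below. *)
Lemma euler_rel_convolution (x : R) (u du U dU : nat -> R) (n : nat) :
  (forall k, u (S k) = sum_f_R0 (fun m => U m * u (k - m)%nat) k) ->
  du (S n) = sum_f_R0 (fun m => dU m * u (n - m)%nat + U m * du (n - m)%nat) n ->
  (forall m, (m <= n)%nat ->
     x * dU m = INR (S m) * U m - (2 * INR m - 1) * shift U m - delta0 m) ->
  (forall k, (k <= n)%nat -> x * du k = INR k * u k - (2 * INR k - 1) * shift u k) ->
  x * du (S n) = INR (S n) * u (S n) - (2 * INR (S n) - 1) * u n.
Proof.
  intros Hrec Hd HU Hu.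
  rewrite Hd, scal_sum.
  rewrite (sum_eq _ (fun m => U m * u (n - m)%nat * INR (S n) - delta0 m * u (n - m)%nat
      - ((2 * INR m - 1) * shift U m * u (n - m)%nat
         + (2 * INR (n - m) - 1) * U m * shift u (n - m)%nat))).
  2:{ intros i Hi.
      transitivity (x * dU i * u (n - i)%nat + U i * (x * du (n - i)%nat)); [ring|].
      rewrite HU, Hu by lia; rewrite !S_INR, minus_INR by lia; ring. }
  rewrite !minus_sum, <- scal_sum, <- Hrec, sum_delta0_l, sum_cross by exact Hrec.
  rewrite S_INR; ring.
Qed.

Definition euler_rel (u : nat -> R -> R) (k : nat) : Prop :=
  forall x, x * Derive (u k) x = INR k * u k x - (2 * INR k - 1) * shift (fun j => u j x) k.

Lemma is_derive_0_const (F : R -> R) :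
  (forall y, is_derive F y 0) -> forall x y, F x = F y.
Proof.
  intros H x y.
  destruct (MVT_gen F x y (fun _ => 0)) as [c [_ Hc]].
  - intros; apply H.
  - intros z _; apply derivable_continuous_pt; exists 0; apply is_derive_Reals, H.
  - lra.
Qed.

(* [v] plays the role of [u_(k-1)]; [U' = c u] and [V' = c v]. *)
Lemma euler_rel_antiderivative (m c : R) (u U v V : R -> R) :
  (forall y, ex_derive u y) ->
  (forall y, is_derive U y (c * u y)) -> (forall y, is_derive V y (c * v y)) ->
  (forall y, y * Derive u y = m * u y - (2 * m - 1) * v y) ->
  forall x y, c * (x * u x) - (m + 1) * U x + (2 * m - 1) * V x
            = c * (y * u y) - (m + 1) * U y + (2 * m - 1) * V y.
Proof.
  intros Hu HU HV Heuler.
  apply (is_derive_0_const (fun y => c * (y * u y) - (m + 1) * U y + (2 * m - 1) * V y)).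
  intros y; auto_derive.
  - repeat split; auto; eexists; eauto.
  - change (fun x : R => u x) with u; change (fun x : R => U x) with U;
      change (fun x : R => V x) with V.
    rewrite (is_derive_unique _ _ _ (HU y)), (is_derive_unique _ _ _ (HV y)).
    transitivity (c * (y * Derive u y - m * u y + (2 * m - 1) * v y)); [ring|].
    rewrite Heuler; ring.
Qed.

Lemma is_derive_shift (F : nat -> R -> R) (f : nat -> R -> R) (m : nat) (y : R) :
  (forall k, is_derive (F k) y (f k y)) ->
  is_derive (fun z => shift (fun k => F k z) m) y (shift (fun k => f k y) m).
Proof. intros H; destruct m; simpl; [apply is_derive_cst | apply H]. Qed.

Lemma Q_at1 (m : nat) : Q m 1 = delta0 m.
Proof.
  destruct m as [|m]; [apply Q_0|].
  rewrite Q_succ, (sum_eq _ (fun _ => 0)) by (intros; rewrite IQ_at1; ring).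
  rewrite sum_cte; simpl; ring.
Qed.

Lemma IQ_euler (m : nat) : euler_rel Q m -> forall x,
  x * - Q m x = INR (S m) * IQ m x - (2 * INR m - 1) * shift (fun k => IQ k x) m - delta0 m.
Proof.
  intros Hm x.
  assert (Hshift1 : shift (fun k => IQ k 1) m = 0) by (destruct m; simpl; auto using IQ_at1).
  assert (H := euler_rel_antiderivative (INR m) (-1) (Q m) (IQ m)
    (fun y => shift (fun k => Q k y) m) (fun y => shift (fun k => IQ k y) m) (ex_derive_Q m)).
  specialize (H ltac:(intros y; replace (-1 * Q m y) with (- Q m y) by ring;
                      apply is_derive_IQ)).
  specialize (H ltac:(intros y; cbv beta; replace (-1 * _) with (shift (fun k => - Q k y) m)
                        by (destruct m; simpl; ring);
                      apply (is_derive_shift IQ (fun k y => - Q k y)); intros; apply is_derive_IQ)).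
  specialize (H Hm x 1); rewrite Q_at1, IQ_at1, Hshift1 in H.
  rewrite S_INR; lra.
Qed.

Lemma IP_euler (m : nat) : euler_rel P m -> forall x,
  x * P m x = INR (S m) * IP m x - (2 * INR m - 1) * shift (fun k => IP k x) m.
Proof.
  intros Hm x.
  assert (Hshift0 : shift (fun k => IP k 0) m = 0) by (destruct m; simpl; auto using IP_at0).
  assert (H := euler_rel_antiderivative (INR m) 1 (P m) (IP m)
    (fun y => shift (fun k => P k y) m) (fun y => shift (fun k => IP k y) m) (ex_derive_P m)).
  specialize (H ltac:(intros y; rewrite Rmult_1_l; apply is_derive_IP)).
  specialize (H ltac:(intros y; cbv beta; rewrite Rmult_1_l;
                      apply (is_derive_shift IP P); intros; apply is_derive_IP)).
  specialize (H Hm x 0); rewrite IP_at0, Hshift0 in H.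
  rewrite S_INR; lra.
Qed.

Lemma euler_rel_Q (k : nat) : euler_rel Q k.
Proof.
  induction k as [k IH] using (well_founded_induction Nat.lt_wf_0); intros x.
  destruct k as [|n]; [rewrite Derive_Q_0; simpl; ring|].
  cbn [shift].
  apply (euler_rel_convolution x (fun k => Q k x) (fun k => Derive (Q k) x)
           (fun k => IQ k x) (fun k => - Q k x) n).
  - intros; apply Q_succ.
  - apply Derive_Q_succ.
  - intros m Hm; apply IQ_euler, IH; lia.
  - intros j Hj; apply IH; lia.
Qed.

Lemma euler_rel_P (k : nat) : euler_rel P k.
Proof.
  induction k as [k IH] using (well_founded_induction Nat.lt_wf_0); intros x.
  destruct k as [|n]; [rewrite Derive_P_0; simpl; ring|].
  cbn [shift].
  apply (euler_rel_convolution x (fun k => P k x) (fun k => Derive (P k) x)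
           (fun k => IP k x + IQ k x) (fun k => P k x - Q k x) n).
  - intros; apply P_succ.
  - apply Derive_P_succ.
  - intros m Hm.
    assert (HP := IP_euler m (IH m ltac:(lia)) x).
    assert (HQ := IQ_euler m (euler_rel_Q m) x).
    replace (shift (fun k => IP k x + IQ k x) m)
      with (shift (fun k => IP k x) m + shift (fun k => IQ k x) m) by (destruct m; simpl; ring).
    lra.
  - intros j Hj; apply IH; lia.
Qed.

(** * The moment recursion *)

Lemma sum_triangle_swap (g : nat -> nat -> R) (n : nat) :
  sum_f_R0 (fun m => sum_f_R0 (fun k => g k (m - k)%nat) m) n =
  sum_f_R0 (fun k => sum_f_R0 (fun j => g k j) (n - k)) n.
Proof.
  induction n as [|n IH]; [reflexivity|].
  rewrite tech5, IH, (tech5 (fun k => sum_f_R0 (fun j => g k j) (S n - k))), Nat.sub_diag.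
  rewrite (sum_eq (fun k => sum_f_R0 (fun j => g k j) (S n - k))
                  (fun k => sum_f_R0 (fun j => g k j) (n - k) + g k (S n - k)%nat)).
  2:{ intros i Hi; replace (S n - i)%nat with (S (n - i)) by lia; reflexivity. }
  rewrite sum_plus, tech5; simpl; rewrite Nat.sub_diag; ring.
Qed.

Lemma PS_mult_comm (u v : nat -> R) : PS_mult u v = PS_mult v u.
Proof.
  apply functional_extensionality; intros n; unfold PS_mult.
  rewrite <- sum_f_R0_skip; apply sum_eq; intros i Hi.
  replace (n - (n - i))%nat with i by lia; ring.
Qed.

Lemma PS_mult_assoc (u v w : nat -> R) :
  PS_mult (PS_mult u v) w = PS_mult u (PS_mult v w).
Proof.
  apply functional_extensionality; intros n; unfold PS_mult.
  rewrite (sum_eq _ (fun m => sum_f_R0 (fun k => u k * v (m - k)%nat * w (n - k - (m - k))%nat) m)).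
  2:{ intros m Hm; rewrite Rmult_comm, scal_sum; apply sum_eq; intros k Hk.
      replace (n - k - (m - k))%nat with (n - m)%nat by lia; ring. }
  rewrite (sum_triangle_swap (fun k j => u k * v j * w (n - k - j)%nat)).
  apply sum_eq; intros k Hk; rewrite scal_sum; apply sum_eq; intros; ring.
Qed.

Lemma PS_mult_plus_l (u v w : nat -> R) :
  PS_mult (fun n => u n + v n) w = (fun n => PS_mult u w n + PS_mult v w n).
Proof.
  apply functional_extensionality; intros n; unfold PS_mult.
  rewrite <- sum_plus; apply sum_eq; intros; ring.
Qed.

Lemma PS_mult_delta0_l (u : nat -> R) : PS_mult delta0 u = u.
Proof. apply functional_extensionality; intros n; apply sum_delta0_l. Qed.

Lemma PS_mult_shift_l (u v : nat -> R) : PS_mult (shift u) v = shift (PS_mult u v).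
Proof.
  apply functional_extensionality; intros [|n]; unfold PS_mult; [simpl; ring|].
  rewrite decomp_sum by lia; simpl; rewrite Rmult_0_l, Rplus_0_l; reflexivity.
Qed.

Lemma PS_mult_nonneg (u v : nat -> R) (n : nat) :
  (forall k, (k <= n)%nat -> 0 <= u k) -> (forall k, (k <= n)%nat -> 0 <= v k) ->
  0 <= PS_mult u v n.
Proof.
  intros Hu Hv; unfold PS_mult.
  apply (Rle_trans _ (sum_f_R0 (fun _ => 0) n)); [rewrite sum_cte; lra|].
  apply sum_Rle; intros k Hk; apply Rmult_le_pos; [apply Hu | apply Hv]; lia.
Qed.

Definition mom (n : nat) : R := P n 1.
Definition mom_tail (n : nat) : R := mom n - delta0 n.
Definition IP_at1 (n : nat) : R := IP n 1.
Definition Derive_P_at1 (n : nat) : R := Derive (P n) 1.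
Definition cubic_coef : nat -> R := PS_mult (PS_mult mom mom) mom_tail.

Lemma mom_0 : mom 0 = 1.
Proof. apply P_0. Qed.

Lemma mom_succ (n : nat) : mom (S n) = PS_mult IP_at1 mom n.
Proof.
  unfold mom; rewrite P_succ; apply sum_eq; intros.
  unfold IP_at1; rewrite IQ_at1, Rplus_0_r; reflexivity.
Qed.

Lemma Derive_P_at1_succ (n : nat) :
  Derive_P_at1 (S n) = PS_mult mom_tail mom n + PS_mult IP_at1 Derive_P_at1 n.
Proof.
  unfold Derive_P_at1; rewrite Derive_P_succ; unfold PS_mult; rewrite <- sum_plus.
  apply sum_eq; intros; rewrite IQ_at1, Q_at1; unfold mom_tail, mom, IP_at1; ring.
Qed.

Lemma cubic_coef_recurrence :
  cubic_coef = (fun n => PS_mult mom_tail mom n + PS_mult IP_at1 (shift cubic_coef) n).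
Proof.
  assert (Hshift : shift (PS_mult IP_at1 mom) = mom_tail).
  { apply functional_extensionality; intros [|n]; unfold mom_tail; simpl.
    - rewrite mom_0; ring.
    - rewrite mom_succ; ring. }
  assert (Hmom : mom = (fun n => delta0 n + mom_tail n)).
  { apply functional_extensionality; intros; unfold mom_tail; ring. }
  assert (E1 : PS_mult IP_at1 (shift cubic_coef) = PS_mult mom_tail (PS_mult mom mom_tail)).
  { rewrite PS_mult_comm, PS_mult_shift_l; unfold cubic_coef.
    rewrite (PS_mult_comm _ IP_at1), PS_mult_assoc, <- (PS_mult_assoc IP_at1 mom).
    now rewrite <- PS_mult_shift_l, Hshift. }
  assert (E2 : PS_mult mom mom = (fun n => mom n + PS_mult mom mom_tail n)).
  { rewrite Hmom at 1; rewrite PS_mult_plus_l, PS_mult_delta0_l, (PS_mult_comm mom_tail mom).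
    reflexivity. }
  rewrite E1; unfold cubic_coef; rewrite E2, PS_mult_plus_l.
  now rewrite (PS_mult_comm mom_tail mom), (PS_mult_comm mom_tail (PS_mult mom mom_tail)).
Qed.

Lemma Derive_P_at1_eq (n : nat) : Derive_P_at1 n = shift cubic_coef n.
Proof.
  induction n as [n IH] using (well_founded_induction Nat.lt_wf_0).
  destruct n as [|n]; [apply Derive_P_0|].
  rewrite Derive_P_at1_succ; cbn [shift]; rewrite cubic_coef_recurrence.
  f_equal; unfold PS_mult; apply sum_eq; intros i Hi; rewrite IH by lia; reflexivity.
Qed.

(* The Euler relation of [P_(n+1)] at [x = 1]. *)
Lemma mom_recurrence (n : nat) :
  INR (S n) * mom (S n) = (2 * INR n + 1) * mom n + cubic_coef n.
Proof.
  assert (H := euler_rel_P (S n) 1).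
  fold (Derive_P_at1 (S n)) in H; rewrite Derive_P_at1_eq in H; cbn [shift] in H.
  unfold mom; rewrite S_INR in *; lra.
Qed.

Lemma mom_and_tail_nonneg (n : nat) : 0 <= mom n /\ 0 <= mom_tail n.
Proof.
  induction n as [n IH] using (well_founded_induction Nat.lt_wf_0).
  destruct n as [|n]; [unfold mom_tail; rewrite mom_0; simpl; lra|].
  assert (Hc : 0 <= cubic_coef n).
  { apply PS_mult_nonneg; intros k Hk; [apply PS_mult_nonneg|]; intros; apply IH; lia. }
  assert (Hn := proj1 (IH n ltac:(lia))).
  assert (Hsn : 0 <= mom (S n)).
  { assert (0 < INR (S n)) by (apply lt_0_INR; lia).
    assert (0 <= INR n) by apply pos_INR.
    apply (Rmult_le_reg_l (INR (S n))); [lra|].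
    rewrite Rmult_0_r, mom_recurrence; nra. }
  unfold mom_tail; simpl; lra.
Qed.

Lemma mom_nonneg (n : nat) : 0 <= mom n.
Proof. apply mom_and_tail_nonneg. Qed.

Lemma mom_tail_nonneg (n : nat) : 0 <= mom_tail n.
Proof. apply mom_and_tail_nonneg. Qed.

Lemma cubic_coef_nonneg (n : nat) : 0 <= cubic_coef n.
Proof.
  apply PS_mult_nonneg; intros; [apply PS_mult_nonneg; intros; apply mom_nonneg|].
  apply mom_tail_nonneg.
Qed.

Lemma quadratic_pos (t : R) : 0 < t ^ 2 - t + 1.
Proof. nra. Qed.

Lemma sqrt3_pos : 0 < sqrt 3.
Proof. apply sqrt_lt_R0; lra. Qed.

Lemma is_derive_Tfun (t : R) : is_derive Tfun t (- t / (t ^ 2 - t + 1)).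
Proof.
  unfold Tfun; auto_derive.
  - pose proof (quadratic_pos t); simpl in *; lra.
  - pose proof sqrt3_pos as Hs0; pose proof (sqrt_sqrt 3 ltac:(lra)) as Hs.
    pose proof (quadratic_pos t) as Ht; simpl in Ht.
    set (s := sqrt 3) in *.
    replace (/ (1 + (2 * t + - (1)) * / s * ((2 * t + - (1)) * / s * 1)))
      with (3 / (4 * (t ^ 2 - t + 1))).
    2:{ field_simplify; try (replace (s ^ 2) with 3 by (rewrite <- Hs; ring));
        try field; repeat split; nra. }
    field; split; lra.
Qed.

Lemma atan_inv_sqrt3 : atan (1 / sqrt 3) = PI / 6.
Proof. rewrite <- tan_PI6; apply atan_tan; pose proof PI_RGT_0; lra. Qed.

Lemma Tfun_1 : Tfun 1 = 0.
Proof.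
  unfold Tfun; replace (1 ^ 2 - 1 + 1) with 1 by ring; rewrite ln_1.
  replace ((2 * 1 - 1) / sqrt 3) with (1 / sqrt 3) by (field; apply Rgt_not_eq, sqrt3_pos).
  rewrite atan_inv_sqrt3; ring.
Qed.

Lemma Tfun_0 : Tfun 0 = sqrt 3 * PI / 9.
Proof.
  unfold Tfun; replace (0 ^ 2 - 0 + 1) with 1 by ring; rewrite ln_1.
  replace ((2 * 0 - 1) / sqrt 3) with (- (1 / sqrt 3)) by (field; apply Rgt_not_eq, sqrt3_pos).
  rewrite atan_opp, atan_inv_sqrt3; field.
Qed.

Lemma Tfun_strict_decr (s t : R) : 0 <= s -> s < t -> Tfun t < Tfun s.
Proof.
  intros Hs Hst.
  destruct (MVT_cor2 Tfun (fun c => - c / (c ^ 2 - c + 1)) s t Hst) as [c [Heq Hc]].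
  { intros c _; apply is_derive_Reals, is_derive_Tfun. }
  assert (0 < c / (c ^ 2 - c + 1)) by (apply Rdiv_lt_0_compat; [lra | apply quadratic_pos]).
  unfold Rdiv in *; rewrite Ropp_mult_distr_l_reverse in Heq; nra.
Qed.

Lemma Tfun_0_gt : 17 / 30 < Tfun 0.
Proof.
  rewrite Tfun_0.
  assert (HPI : 3 < PI) by (pose proof PI2_3_2; lra).
  assert (Hsqrt3 : 1.7 < sqrt 3).
  { rewrite <- (sqrt_square 1.7) by lra; apply sqrt_lt_1_alt; lra. }
  nra.
Qed.

(* Since [T'(c) >= -4/3 c], [T] drops by at most [4/3 t^2] on [[0, t]]. *)
Lemma Tfun_gt_half_near0 (t : R) : 0 <= t <= 1 / 100 -> 1 / 2 < Tfun t.
Proof.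
  intros Ht; pose proof Tfun_0_gt.
  destruct (Req_dec t 0) as [->|Ht0]; [lra|].
  destruct (MVT_cor2 Tfun (fun c => - c / (c ^ 2 - c + 1)) 0 t ltac:(lra)) as [c [Heq Hc]].
  { intros c _; apply is_derive_Reals, is_derive_Tfun. }
  assert (Hq : 3 / 4 <= c ^ 2 - c + 1) by nra.
  assert (Hbound : c / (c ^ 2 - c + 1) <= 4 / 3 * c).
  { apply (Rmult_le_reg_r (c ^ 2 - c + 1)); [lra|].
    unfold Rdiv; rewrite Rmult_assoc, Rinv_l by lra; nra. }
  unfold Rdiv in *; rewrite Ropp_mult_distr_l_reverse in Heq; nra.
Qed.

(** * A first integral of [(1 - 2w) F' = F - F^2 + F^3] *)

Definition first_integral (F : R -> R) (w : R) : R := Tfun (/ F w) + / 2 * ln (1 - 2 * w).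

Lemma is_derive_first_integral (F : R -> R) (dF w : R) :
  is_derive F w dF -> 0 < F w -> w < 1 / 2 ->
  is_derive (first_integral F) w
    (((1 - 2 * w) * dF - (F w - F w ^ 2 + F w ^ 3))
     / ((1 - 2 * w) * (F w * (1 - F w + F w ^ 2)))).
Proof.
  intros HF Hpos Hw.
  assert (HT := is_derive_Tfun (/ F w)).
  assert (Hq : 0 < 1 - F w + F w ^ 2) by (pose proof (quadratic_pos (F w)); nra).
  unfold first_integral; auto_derive.
  - repeat split; try lra; eexists; eauto.
  - change (fun x : R => F x) with F; rewrite (is_derive_unique _ _ _ HF).
    change (fun x : R => Tfun x) with Tfun; rewrite (is_derive_unique _ _ _ HT).
    field; repeat split; try lra; nra.
Qed.

Lemma first_integral_mvt (F dF : R -> R) (w0 : R) :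
  0 < w0 < 1 / 2 ->
  (forall w, 0 <= w <= w0 -> is_derive F w (dF w) /\ 0 < F w) ->
  exists c, 0 < c < w0 /\ 0 < F c /\
    first_integral F w0 - first_integral F 0 =
    ((1 - 2 * c) * dF c - (F c - F c ^ 2 + F c ^ 3))
    / ((1 - 2 * c) * (F c * (1 - F c + F c ^ 2))) * w0.
Proof.
  intros Hw0 HF.
  destruct (MVT_cor2 (first_integral F)
    (fun c => ((1 - 2 * c) * dF c - (F c - F c ^ 2 + F c ^ 3))
              / ((1 - 2 * c) * (F c * (1 - F c + F c ^ 2)))) 0 w0 ltac:(lra))
    as [c [Heq Hc]].
  - intros c Hc; destruct (HF c Hc).
    apply is_derive_Reals, is_derive_first_integral; auto; lra.
  - exists c; split; [exact Hc|]; split; [apply HF; lra|].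
    rewrite Heq; ring.
Qed.

Lemma first_integral_nonincr (F dF : R -> R) (w0 : R) :
  0 < w0 < 1 / 2 ->
  (forall w, 0 <= w <= w0 -> is_derive F w (dF w) /\ 0 < F w) ->
  (forall w, 0 < w < w0 -> (1 - 2 * w) * dF w <= F w - F w ^ 2 + F w ^ 3) ->
  first_integral F w0 <= first_integral F 0.
Proof.
  intros Hw0 HF Hineq.
  destruct (first_integral_mvt F dF w0 Hw0 HF) as [c [Hc [Hpos Heq]]].
  assert (0 < (1 - 2 * c) * (F c * (1 - F c + F c ^ 2))).
  { pose proof (quadratic_pos (F c)).
    apply Rmult_lt_0_compat; [lra | apply Rmult_lt_0_compat; nra]. }
  assert (Hnum := Hineq c Hc).
  assert (((1 - 2 * c) * dF c - (F c - F c ^ 2 + F c ^ 3))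
          / ((1 - 2 * c) * (F c * (1 - F c + F c ^ 2))) <= 0).
  { unfold Rdiv; apply Rmult_le_0_r; [lra | left; apply Rinv_0_lt_compat; lra]. }
  nra.
Qed.

Lemma first_integral_const (F dF : R -> R) (w0 : R) :
  0 < w0 < 1 / 2 ->
  (forall w, 0 <= w <= w0 -> is_derive F w (dF w) /\ 0 < F w) ->
  (forall w, 0 < w < w0 -> (1 - 2 * w) * dF w = F w - F w ^ 2 + F w ^ 3) ->
  first_integral F w0 = first_integral F 0.
Proof.
  intros Hw0 HF Hode.
  destruct (first_integral_mvt F dF w0 Hw0 HF) as [c [Hc [_ Heq]]].
  rewrite (Hode c Hc), Rminus_diag in Heq; unfold Rdiv in Heq; lra.
Qed.

Definition mom_psum (N : nat) (w : R) : R := sum_f_R0 (fun n => mom n * w ^ n) N.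
Definition mom_psum_deriv (N : nat) (w : R) : R :=
  sum_f_R0 (fun n => mom n * (INR n * w ^ Nat.pred n)) N.
Definition cubic_psum (N : nat) (w : R) : R := sum_f_R0 (fun n => cubic_coef n * w ^ n) N.

Lemma mom_term_nonneg (n : nat) (w : R) : 0 <= w -> 0 <= mom n * w ^ n.
Proof. intros; apply Rmult_le_pos; [apply mom_nonneg | apply pow_le; lra]. Qed.

Lemma mom_psum_at0 (N : nat) : mom_psum N 0 = 1.
Proof.
  unfold mom_psum; induction N as [|N IH]; simpl; [rewrite mom_0; ring|].
  rewrite IH; ring.
Qed.

Lemma mom_psum_ge1 (N : nat) (w : R) : 0 <= w -> 1 <= mom_psum N w.
Proof.
  intros Hw; unfold mom_psum; induction N as [|N IH]; simpl; [rewrite mom_0; lra|].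
  pose proof (mom_term_nonneg (S N) w Hw); simpl in *; lra.
Qed.

Lemma mom_term_le_psum (n : nat) (w : R) : 0 <= w -> mom n * w ^ n <= mom_psum n w.
Proof.
  intros Hw; unfold mom_psum; destruct n as [|n]; [simpl; lra|].
  rewrite tech5.
  assert (0 <= sum_f_R0 (fun k => mom k * w ^ k) n)
    by (apply cond_pos_sum; intros; apply mom_term_nonneg, Hw).
  lra.
Qed.

Lemma is_derive_mom_psum (N : nat) (w : R) : is_derive (mom_psum N) w (mom_psum_deriv N w).
Proof.
  apply (is_derive_sum_f_R0 (fun n y => mom n * y ^ n)); intros m _.
  apply is_derive_scal, is_derive_Reals, derivable_pt_lim_pow.
Qed.

Lemma sum_PS_mult_le (u v : nat -> R) (N : nat) (w : R) :
  (forall n, 0 <= u n) -> (forall n, 0 <= v n) -> 0 <= w ->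
  sum_f_R0 (fun n => PS_mult u v n * w ^ n) N <=
  sum_f_R0 (fun n => u n * w ^ n) N * sum_f_R0 (fun n => v n * w ^ n) N.
Proof.
  intros Hu Hv Hw; destruct N as [|N]; [unfold PS_mult; simpl; lra|].
  rewrite (cauchy_finite (fun n => u n * w ^ n) (fun n => v n * w ^ n) (S N)) by lia.
  rewrite (sum_eq _ (fun k => sum_f_R0
             (fun p => u p * w ^ p * (v (k - p)%nat * w ^ (k - p))) k)).
  2:{ intros k Hk; unfold PS_mult; rewrite Rmult_comm, scal_sum; apply sum_eq; intros i Hi.
      replace (w ^ k) with (w ^ i * w ^ (k - i)) by (rewrite <- pow_add; f_equal; lia).
      ring. }
  match goal with |- _ <= _ + ?rest => assert (0 <= rest) end; [|lra].
  apply cond_pos_sum; intros k; apply cond_pos_sum; intros l.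
  apply Rmult_le_pos; apply Rmult_le_pos; auto; apply pow_le; lra.
Qed.

Lemma cubic_psum_le (N : nat) (w : R) :
  0 <= w -> cubic_psum N w <= mom_psum N w * mom_psum N w * (mom_psum N w - 1).
Proof.
  intros Hw; unfold cubic_psum, cubic_coef.
  assert (Htail : sum_f_R0 (fun n => mom_tail n * w ^ n) N = mom_psum N w - 1).
  { unfold mom_psum, mom_tail.
    rewrite (sum_eq _ (fun n => mom n * w ^ n - delta0 n * w ^ n)) by (intros; ring).
    rewrite minus_sum; f_equal.
    destruct N as [|N]; [simpl; ring|].
    rewrite decomp_sum by lia; simpl.
    rewrite (sum_eq _ (fun _ => 0)) by (intros; simpl; ring); rewrite sum_cte; ring. }
  eapply Rle_trans.
  { apply sum_PS_mult_le; [intros; apply PS_mult_nonneg; intros; apply mom_nonneg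
                           | apply mom_tail_nonneg | exact Hw]. }
  rewrite Htail; apply Rmult_le_compat_r; [pose proof (mom_psum_ge1 N w Hw); lra|].
  apply sum_PS_mult_le; auto; apply mom_nonneg.
Qed.

Lemma weighted_mom_psum_succ (M : nat) (w : R) :
  sum_f_R0 (fun n => INR n * mom n * w ^ n) (S M) =
  w * (2 * sum_f_R0 (fun n => INR n * mom n * w ^ n) M + mom_psum M w + cubic_psum M w).
Proof.
  rewrite decomp_sum by lia; cbn [Nat.pred INR]; rewrite !Rmult_0_l, Rplus_0_l.
  rewrite (sum_eq _ (fun n => (2 * (INR n * mom n * w ^ n) + mom n * w ^ n
                               + cubic_coef n * w ^ n) * w)).
  2:{ intros k _; transitivity (INR (S k) * mom (S k) * w ^ k * w); [simpl; ring|].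
      rewrite mom_recurrence; ring. }
  rewrite <- scal_sum; f_equal; unfold mom_psum, cubic_psum.
  rewrite (sum_eq _ (fun n => INR n * mom n * w ^ n * 2 + mom n * w ^ n
                              + cubic_coef n * w ^ n)) by (intros; ring).
  rewrite !sum_plus, <- scal_sum; ring.
Qed.

(* Truncating the identity [(1 - 2w) M' = M + C] (with [C = M^2 (M - 1)]
   the series of [cubic_coef]) only loses nonnegative terms. *)
Lemma mom_psum_deriv_le (N : nat) (w : R) : 0 <= w ->
  (1 - 2 * w) * (w * mom_psum_deriv N w) <= w * (mom_psum N w + cubic_psum N w).
Proof.
  intros Hw.
  assert (Hweighted : w * mom_psum_deriv N w = sum_f_R0 (fun n => INR n * mom n * w ^ n) N).
  { unfold mom_psum_deriv; rewrite scal_sum; apply sum_eq; intros [|k] _; simpl; ring. }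
  assert (Hs := mom_psum_ge1 N w Hw).
  assert (Hc : 0 <= cubic_psum N w)
    by (apply cond_pos_sum; intros; apply Rmult_le_pos; [apply cubic_coef_nonneg | apply pow_le; lra]).
  rewrite Hweighted; destruct N as [|M]; [simpl; nra|].
  set (X := sum_f_R0 (fun n => INR n * mom n * w ^ n)).
  assert (HX : X M <= X (S M)).
  { unfold X; rewrite tech5.
    assert (0 <= INR (S M)) by apply pos_INR; pose proof (mom_term_nonneg (S M) w Hw); nra. }
  assert (Hs' : mom_psum M w <= mom_psum (S M) w)
    by (unfold mom_psum; rewrite tech5; pose proof (mom_term_nonneg (S M) w Hw); lra).
  assert (Hc' : cubic_psum M w <= cubic_psum (S M) w).
  { unfold cubic_psum; rewrite tech5.
    assert (0 <= cubic_coef (S M) * w ^ S M)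
      by (apply Rmult_le_pos; [apply cubic_coef_nonneg | apply pow_le; lra]).
    lra. }
  unfold X in *; rewrite weighted_mom_psum_succ in *; nra.
Qed.

Lemma mom_psum_ode_ineq (N : nat) (w : R) : 0 < w ->
  (1 - 2 * w) * mom_psum_deriv N w <= mom_psum N w - mom_psum N w ^ 2 + mom_psum N w ^ 3.
Proof.
  intros Hw.
  assert (H1 := mom_psum_deriv_le N w ltac:(lra)).
  assert (H2 := cubic_psum_le N w ltac:(lra)).
  apply (Rmult_le_reg_l w); [exact Hw|]; simpl; nra.
Qed.

Lemma ln_1_minus_2w_gt (w : R) : 0 <= w < 1 / 4 -> - 1 < ln (1 - 2 * w).
Proof.
  intros Hw.
  assert (ln (/ 2) < ln (1 - 2 * w)) by (apply ln_increasing; lra).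
  assert (ln 2 < 1).
  { rewrite <- ln_exp; apply ln_increasing; [lra|].
    pose proof (exp_ineq1 1 ltac:(lra)); lra. }
  rewrite ln_Rinv in * by lra; lra.
Qed.

(* The first integral of the partial sums decreases from [T(1) = 0], so
   [T(1 / mom_psum N w) <= - ln(1 - 2w) / 2 < 1/2], which keeps
   [1 / mom_psum N w] away from [0]. *)
Lemma mom_psum_le_100 (N : nat) (w : R) : 0 <= w < 1 / 4 -> mom_psum N w <= 100.
Proof.
  intros Hw; destruct (Req_dec w 0) as [->|Hw0]; [rewrite mom_psum_at0; lra|].
  assert (Hdecr : first_integral (mom_psum N) w <= first_integral (mom_psum N) 0).
  { apply (first_integral_nonincr _ (mom_psum_deriv N)); [lra| |].
    - intros x Hx; split; [apply is_derive_mom_psum|].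
      pose proof (mom_psum_ge1 N x ltac:(lra)); lra.
    - intros x Hx; apply mom_psum_ode_ineq; lra. }
  unfold first_integral in Hdecr.
  rewrite mom_psum_at0, Rinv_1, Tfun_1, Rmult_0_r, Rminus_0_r, ln_1 in Hdecr.
  pose proof (ln_1_minus_2w_gt w Hw).
  destruct (Rle_lt_dec (mom_psum N w) 100) as [|Hbig]; [assumption|].
  assert (0 < / mom_psum N w) by (apply Rinv_0_lt_compat; lra).
  assert (/ mom_psum N w <= 1 / 100).
  { replace (1 / 100) with (/ 100) by field; apply Rinv_le_contravar; lra. }
  pose proof (Tfun_gt_half_near0 (/ mom_psum N w) ltac:(lra)); lra.
Qed.

(** * The generating function of the even moments *)

Lemma CV_radius_gt_of_bounded (u : nat -> R) :
  (forall r, 0 <= r < 1 / 4 -> exists M, forall n, Rabs (u n * r ^ n) <= M) ->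
  forall w, 0 <= w < 1 / 4 -> Rbar_lt (Rabs w) (CV_radius u).
Proof.
  intros H w Hw; set (r := (w + 1 / 4) / 2).
  assert (Hr : Rbar_le r (CV_radius u))
    by (apply (proj1 (CV_radius_bounded u)), H; unfold r; lra).
  rewrite Rabs_pos_eq by lra.
  destruct (CV_radius u) as [R| |]; simpl in *; auto; unfold r in Hr; lra.
Qed.

Lemma CV_radius_mom (w : R) : 0 <= w < 1 / 4 -> Rbar_lt (Rabs w) (CV_radius mom).
Proof.
  apply CV_radius_gt_of_bounded; intros r Hr; exists 100; intros n.
  rewrite Rabs_pos_eq by (apply mom_term_nonneg; lra).
  eapply Rle_trans; [apply mom_term_le_psum; lra | apply mom_psum_le_100; lra].
Qed.

Lemma CV_radius_mom_tail (w : R) : 0 <= w < 1 / 4 -> Rbar_lt (Rabs w) (CV_radius mom_tail).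
Proof.
  apply CV_radius_gt_of_bounded; intros r Hr; exists 100; intros n.
  rewrite Rabs_pos_eq by (apply Rmult_le_pos; [apply mom_tail_nonneg | apply pow_le; lra]).
  apply (Rle_trans _ (mom n * r ^ n)).
  { apply Rmult_le_compat_r; [apply pow_le; lra|]; unfold mom_tail; destruct n; simpl; lra. }
  eapply Rle_trans; [apply mom_term_le_psum; lra | apply mom_psum_le_100; lra].
Qed.

Lemma CV_radius_mom_sq (w : R) :
  0 <= w < 1 / 4 -> Rbar_lt (Rabs w) (CV_radius (PS_mult mom mom)).
Proof.
  apply CV_radius_gt_of_bounded; intros r Hr; exists (100 * 100); intros n.
  assert (Hnn : forall k, 0 <= PS_mult mom mom k * r ^ k).
  { intros; apply Rmult_le_pos; [apply PS_mult_nonneg; intros; apply mom_nonneg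
                                | apply pow_le; lra]. }
  rewrite Rabs_pos_eq by apply Hnn.
  apply (Rle_trans _ (sum_f_R0 (fun k => PS_mult mom mom k * r ^ k) n)).
  { destruct n as [|n]; [simpl; lra|].
    rewrite tech5; pose proof (cond_pos_sum _ n Hnn); lra. }
  eapply Rle_trans; [apply sum_PS_mult_le; try apply mom_nonneg; lra|].
  fold (mom_psum n r); pose proof (mom_psum_le_100 n r Hr).
  pose proof (mom_psum_ge1 n r ltac:(lra)); nra.
Qed.

Definition mom_gf (w : R) : R := PSeries mom w.

Lemma is_pseries_mom (w : R) : 0 <= w < 1 / 4 -> is_pseries mom w (mom_gf w).
Proof. intros Hw; apply PSeries_correct, CV_radius_inside, CV_radius_mom, Hw. Qed.

Lemma mom_psum_cv (w : R) : 0 <= w < 1 / 4 -> Un_cv (fun N => mom_psum N w) (mom_gf w).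
Proof.
  intros Hw; assert (H := is_pseries_mom w Hw).
  unfold is_pseries in H; apply is_series_Reals in H.
  intros eps He; destruct (H eps He) as [N HN]; exists N; intros n Hn.
  replace (mom_psum n w) with (sum_f_R0 (fun k => scal (pow_n w k) (mom k)) n); [auto|].
  apply sum_eq; intros; rewrite pow_n_pow; apply Rmult_comm.
Qed.

Lemma mom_gf_0 : mom_gf 0 = 1.
Proof. unfold mom_gf; rewrite PSeries_0; apply mom_0. Qed.

Lemma mom_gf_ge1 (w : R) : 0 <= w < 1 / 4 -> 1 <= mom_gf w.
Proof.
  intros Hw; apply Rle_cv_lim with (Un := fun _ => 1) (Vn := fun N => mom_psum N w).
  - intros; apply mom_psum_ge1; lra.
  - intros e He; exists 0%nat; intros; unfold Rdist; rewrite Rminus_diag, Rabs_R0; auto.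
  - now apply mom_psum_cv.
Qed.

Lemma is_derive_mom_gf (w : R) :
  0 <= w < 1 / 4 -> is_derive mom_gf w (PSeries (PS_derive mom) w).
Proof. intros; apply is_derive_PSeries, CV_radius_mom; auto. Qed.

(* Summing [mom_recurrence]: [M' = 2 w M' + M + M^2 (M - 1)]. *)
Lemma mom_gf_ode (w : R) : 0 < w < 1 / 4 ->
  (1 - 2 * w) * PSeries (PS_derive mom) w = mom_gf w - mom_gf w ^ 2 + mom_gf w ^ 3.
Proof.
  intros Hw; assert (Hw' : 0 <= w < 1 / 4) by lra.
  set (F := mom_gf w); set (D := PSeries (PS_derive mom) w).
  assert (HD : is_pseries (PS_derive mom) w D)
    by (apply PSeries_correct, ex_pseries_derive, CV_radius_mom, Hw').
  assert (HF := is_pseries_mom w Hw'); fold F in HF.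
  assert (Htail : is_pseries mom_tail w (F - 1)).
  { assert (H := is_pseries_incr_1 _ _ _
                   (is_pseries_decr_1 mom w (/ w) F ltac:(change (/ w * w = 1); field; lra) HF)).
    replace (F - 1) with (scal w (scal (/ w) (plus F (opp (mom 0%nat))))).
    2:{ change (w * (/ w * (F + - mom 0%nat)) = F - 1); rewrite mom_0; field; lra. }
    eapply is_pseries_ext; [|exact H]; intros [|n]; unfold mom_tail; simpl.
    - rewrite mom_0; change (0 = 1 - 1 :> R); ring.
    - change (mom (S n) = mom (S n) - 0 :> R); ring. }
  assert (Hcubic : is_pseries cubic_coef w (F * F * (F - 1))).
  { apply is_pseries_mult; [apply is_pseries_mult; auto; apply CV_radius_mom; auto
                           | exact Htail | apply CV_radius_mom_sq; auto
                           | apply CV_radius_mom_tail; auto]. }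
  assert (Hsum : is_pseries (PS_plus (PS_scal 2 (PS_incr_1 (PS_derive mom)))
                                     (PS_plus mom cubic_coef)) w
                            (2 * (w * D) + (F + F * F * (F - 1)))).
  { apply (is_pseries_plus _ _ w (2 * (w * D)) (F + F * F * (F - 1))).
    - apply (is_pseries_scal 2 _ w (w * D)); [change (w * 2 = 2 * w); ring|].
      exact (is_pseries_incr_1 _ _ _ HD).
    - apply (is_pseries_plus _ _ w F (F * F * (F - 1))); auto. }
  assert (Hsum' : is_pseries (PS_derive mom) w (2 * (w * D) + (F + F * F * (F - 1)))).
  { eapply is_pseries_ext; [|exact Hsum]; intros n.
    unfold PS_plus, PS_scal, PS_derive.
    change (plus ?x ?y) with (x + y); change (scal ?x ?y) with (x * y).
    destruct n as [|n]; cbn [PS_incr_1]; repeat change (plus ?x ?y) with (x + y).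
    - change (@zero R_NormedModule) with 0; pose proof (mom_recurrence 0); simpl INR in *; lra.
    - pose proof (mom_recurrence (S n)); rewrite !S_INR in *; lra. }
  assert (E := is_pseries_unique _ _ _ Hsum'); rewrite (is_pseries_unique _ _ _ HD) in E.
  simpl; nra.
Qed.

Lemma Tfun_inv_mom_gf (w : R) : 0 <= w < 1 / 4 -> Tfun (/ mom_gf w) = - / 2 * ln (1 - 2 * w).
Proof.
  intros Hw; destruct (Req_dec w 0) as [->|Hw0].
  { rewrite mom_gf_0, Rinv_1, Tfun_1, Rmult_0_r, Rminus_0_r, ln_1; ring. }
  assert (E : first_integral mom_gf w = first_integral mom_gf 0).
  { apply (first_integral_const _ (PSeries (PS_derive mom))); [lra| |].
    - intros x Hx; split; [apply is_derive_mom_gf; lra|].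
      pose proof (mom_gf_ge1 x ltac:(lra)); lra.
    - intros x Hx; apply mom_gf_ode; lra. }
  unfold first_integral in E.
  rewrite mom_gf_0, Rinv_1, Tfun_1, Rmult_0_r, Rminus_0_r, ln_1 in E; lra.
Qed.

Lemma exp_half_ln (x : R) : 0 < x -> exp (- / 2 * ln x) = / sqrt x.
Proof.
  intros Hx.
  assert (Hs : sqrt x = exp (/ 2 * ln x)).
  { apply sqrt_lem_1; [lra | left; apply exp_pos|].
    rewrite <- exp_plus; replace (/ 2 * ln x + / 2 * ln x) with (ln x) by field.
    apply exp_ln, Hx. }
  rewrite Hs, <- exp_Ropp; f_equal; ring.
Qed.

Lemma Sinv_eq (w : R) : 0 <= w < 1 / 4 -> Sinv (/ sqrt (1 - 2 * w)) = / mom_gf w.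
Proof.
  intros Hw; set (y := / sqrt (1 - 2 * w)).
  assert (Hinv : 0 <= / mom_gf w)
    by (left; apply Rinv_0_lt_compat; pose proof (mom_gf_ge1 w Hw); lra).
  assert (Hy : exp (Tfun (/ mom_gf w)) = y)
    by (rewrite Tfun_inv_mom_gf by exact Hw; apply exp_half_ln; lra).
  destruct (epsilon_spec (inhabits 0) (fun t => 0 <= t /\ exp (Tfun t) = y)
              (ex_intro _ (/ mom_gf w) (conj Hinv Hy))) as [Ht0 Ht].
  unfold Sinv; fold y.
  set (t := epsilon (inhabits 0) (fun t => 0 <= t /\ exp (Tfun t) = y)) in *.
  assert (E : Tfun t = Tfun (/ mom_gf w)) by (apply exp_inv; congruence).
  destruct (Rtotal_order t (/ mom_gf w)) as [Hlt|[Heq|Hgt]]; [|exact Heq|].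
  - pose proof (Tfun_strict_decr _ _ Ht0 Hlt); lra.
  - pose proof (Tfun_strict_decr _ _ Hinv Hgt); lra.
Qed.

Lemma vmoment_double (k : nat) :
  vmoment (2 * k) = mom k /\ vmoment (S (2 * k)) = 0.
Proof.
  assert (Heven : Nat.even (2 * k) = true) by (apply Nat.even_spec; exists k; lia).
  unfold vmoment; rewrite Nat.even_succ, <- Nat.negb_even, Heven, Nat.div2_double.
  split; reflexivity.
Qed.

Lemma vmoment_psum_double (z : R) (k : nat) :
  sum_f_R0 (fun n => vmoment n * z ^ n) (2 * k) = mom_psum k (z ^ 2) /\
  sum_f_R0 (fun n => vmoment n * z ^ n) (S (2 * k)) = mom_psum k (z ^ 2).
Proof.
  induction k as [|k [_ IH]].
  - unfold vmoment, mom_psum, mom, P; simpl; split; ring.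
  - assert (Heven : sum_f_R0 (fun n => vmoment n * z ^ n) (2 * S k) = mom_psum (S k) (z ^ 2)).
    { replace (2 * S k)%nat with (S (S (2 * k))) by lia.
      unfold mom_psum; rewrite !tech5; fold (mom_psum k (z ^ 2)); rewrite <- IH, tech5.
      replace (S (S (2 * k))) with (2 * S k)%nat by lia.
      rewrite (proj1 (vmoment_double (S k))), <- pow_mult; reflexivity. }
    split; [exact Heven|].
    rewrite tech5, Heven, (proj2 (vmoment_double (S k))); ring.
Qed.

Lemma vmoment_psum (z : R) (n : nat) :
  sum_f_R0 (fun k => vmoment k * z ^ k) n = mom_psum (Nat.div2 n) (z ^ 2).
Proof.
  rewrite (Nat.div2_odd n) at 1; destruct (Nat.odd n); cbn [Nat.b2n].
  - rewrite Nat.add_1_r; apply vmoment_psum_double.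
  - rewrite Nat.add_0_r; apply vmoment_psum_double.
Qed.

Lemma vmoment_series (z : R) : - (1 / 2) < z < 1 / 2 ->
  infinite_sum (fun n => vmoment n * z ^ n) (mom_gf (z ^ 2)).
Proof.
  intros Hz; assert (Hw : 0 <= z ^ 2 < 1 / 4) by (simpl; nra).
  intros eps Heps; destruct (mom_psum_cv _ Hw eps Heps) as [N HN].
  exists (2 * N)%nat; intros n Hn; rewrite vmoment_psum; apply HN.
  pose proof (Nat.div2_odd n); destruct (Nat.odd n); cbn [Nat.b2n] in *; lia.
Qed.

Theorem mainTheorem4 :
  infinite_sum (fun n => vmoment n * 0 ^ n) 1 /\
  (forall z : R, -(1/2) < z < 1/2 -> z <> 0 ->
     infinite_sum (fun n => vmoment n * z ^ n)
                  (/ Sinv (/ sqrt (1 - 2 * z ^ 2)))).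
Proof.
  split.
  - replace 1 with (mom_gf (0 ^ 2)) by (simpl; rewrite Rmult_0_l; apply mom_gf_0).
    apply vmoment_series; lra.
  - intros z Hz _.
    rewrite Sinv_eq, Rinv_inv by (simpl; nra).
    now apply vmoment_series.
Qed.
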